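(* Let $G(\circ)$, $G(\ast)$ be groups on a set $G$ of even size $n$. Then there are at most $h+2\varphi(n/2)$ elements $a\in G$ with $\mathrm{dist}_a<3$, where $\varphi$ is Euler's totient function.
   Context: $\mathrm{dist}_a=|\{b\in G: a\circ b\ne a\ast b\}|$, $H=\{a\in G:\mathrm{dist}_a=0\}$ and $h=|H|$. *)

From mathcomp Require Import all_boot.
Set Implicit Arguments. Unset Strict Implicit. Unset Printing Implicit Defensive.

Definition is_group_law (T : Type) (op : T -> T -> T) : Prop :=
  (forall x y z, op x (op y z) = op (op x y) z) /\
  exists e : T, (forall x, op e x = x /\ op x e = x) /\
                (forall x, exists y, op x y = e /\ op y x = e).

Definition dist (T : finType) (o s : T -> T -> T) (a : T) : nat :=
  #|[set b : T | o a b != s a b]|.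

Definition Hset (T : finType) (o s : T -> T -> T) : {set T} :=
  [set a : T | dist o s a == 0].

From mathcomp Require Import all_boot all_fingroup cyclic zify.
Set Implicit Arguments. Unset Strict Implicit. Unset Printing Implicit Defensive.

(* Write L_a, L'_a for the left translations by a in the two groups; dist_a counts the
   points where they differ.  A permutation cannot differ from another at exactly one
   point, and differing at exactly two points means L_a = L'_a composed with a
   transposition.  Every cycle of a left translation has length ord(a), and a
   transposition splits or merges exactly one cycle; with uniform cycle lengths this
   forces a to have order n in one group and n/2 in the other.  If both orientations
   occur, both groups are cyclic and each orientation accounts for at most phi(n/2)
   elements; if only one occurs, it accounts for at most phi(n) <= 2 phi(n/2). *)

Local Open Scope group_scope.

Section PermutationCycles.
Variable T : finType.
Implicit Types p q : {perm T}.

Lemma porbits_partition p : partition (porbits p) [set: T].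
Proof.
have -> : porbits p = orbit 'P <[p]> @: [set: T].
  apply/setP => C; apply/imsetP/imsetP => -[x _ ->]; exists x;
  by rewrite ?inE ?porbit.unlock.
by apply: orbit_partition; apply/actsP => g _ x; rewrite !inE.
Qed.

Lemma card_porbits_uniform p k :
  (forall z, #|porbit p z| = k) -> #|T| = (#|porbits p| * k)%N.
Proof.
move=> hk; rewrite -cardsT; apply: card_uniform_partition (porbits_partition p).
by move=> _ /imsetP [z _ ->].
Qed.

Lemma porbit_tperm_mul_out q x y z :
  x \notin porbit q z -> y \notin porbit q z ->
  porbit (tperm x y * q) z = porbit q z.
Proof.
move=> xz yz.
have iterE i : ((tperm x y * q) ^+ i) z = (q ^+ i) z.
  elim: i => [|i IH]; first by rewrite !expg0.
  have nx : (q ^+ i) z != x by apply: contraNneq xz => <-; rewrite mem_porbit.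
  have ny : (q ^+ i) z != y by apply: contraNneq yz => <-; rewrite mem_porbit.
  by rewrite !expgSr !permM IH tpermD // eq_sym.
by apply/setP => w; apply/porbitP/porbitP => -[i ->]; exists i; rewrite iterE.
Qed.

Lemma mem_porbit_tperm_mul q x y :
  x != y -> x \notin porbit q y -> x \in porbit (tperm x y * q) y.
Proof.
move=> nxy xq; have := porbits_mul_tperm q x y.
have := porbits_mul_tperm (tperm x y * q) x y.
by rewrite /= tpermKg xq nxy; case: (x \in _) => /=; lia.
Qed.

Lemma tperm_mul_uniform_split p q x y mp mq :
  x != y -> p = tperm x y * q -> x \in porbit q y ->
  (forall z, #|porbit p z| = mp) -> (forall z, #|porbit q z| = mq) ->
  mq = #|T| /\ mp.*2 = #|T|.
Proof.
move=> nxy pE xq hp hq.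
have cnt := porbits_mul_tperm q x y; rewrite /= -pE xq nxy addn0 addn1 in cnt.
have Tp := card_porbits_uniform hp; have Tq := card_porbits_uniform hq.
have mp0 : 0 < mp by rewrite -(hp x) lt0n card_porbit_neq0.
have qyT : porbit q y = [set: T].
  apply/setP => z; rewrite inE; apply/negbNE/negP => zy.
  have out w : w \in porbit q y -> w \notin porbit q z.
    move=> wy; apply/negP; rewrite -eq_porbit_mem => /eqP wz.
    by move: zy; rewrite -eq_porbit_mem -wz eq_porbit_mem wy.
  have mpq : mp = mq.
    by rewrite -(hp z) -(hq z) pE porbit_tperm_mul_out // out // porbit_id.
  (* [set] merges two syntactically different forms of [#|porbits q|] for [lia]. *)
  by move: Tp Tq mp0; rewrite cnt mpq mulSn; set c := #|porbits q|; lia.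
have mqT : mq = #|T| by rewrite -(hq y) qyT cardsT.
have T0 : 0 < #|T| by rewrite -mqT -(hq x) lt0n card_porbit_neq0.
have cq1 : #|porbits q| = 1%N.
  by apply/eqP; rewrite -(eqn_pmul2r T0) mul1n -{1}mqT -Tq.
by split=> //; move: Tp; rewrite cnt cq1; lia.
Qed.

Lemma tperm_mul_uniform_cases p q x y mp mq :
  x != y -> p = tperm x y * q ->
  (forall z, #|porbit p z| = mp) -> (forall z, #|porbit q z| = mq) ->
  (mq = #|T| /\ mp.*2 = #|T|) \/ (mp = #|T| /\ mq.*2 = #|T|).
Proof.
move=> nxy pE hp hq; have [xq|xq] := boolP (x \in porbit q y).
  by left; apply: tperm_mul_uniform_split nxy pE xq hp hq.
have qE : q = tperm x y * p by rewrite pE tpermKg.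
have pxy : x \in porbit p y by rewrite pE mem_porbit_tperm_mul.
by right; apply: tperm_mul_uniform_split nxy qE pxy hq hp.
Qed.

Lemma mismatch_partner p q b : p b != q b ->
  exists w, [/\ w != b, p w != q w & q w = p b].
Proof.
move=> pqb; set w := q^-1 (p b).
have qw : q w = p b by rewrite /w permKV.
have nwb : w != b by apply: contraNneq pqb => wb; rewrite -qw wb.
by exists w; split=> //; rewrite qw; apply: contraNneq nwb => /perm_inj ->.
Qed.

Lemma card_mismatch_neq1 p q : #|[set z | p z != q z]| != 1%N.
Proof.
apply/negP => /cards1P [b E].
have : b \in [set z | p z != q z] by rewrite E set11.
rewrite inE => /mismatch_partner [w [nwb pqw _]].
have : w \in [set z | p z != q z] by rewrite inE.
by rewrite E inE (negbTE nwb).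
Qed.

Lemma card_mismatch2_tperm p q : #|[set z | p z != q z]| = 2 ->
  exists x y, x != y /\ p = tperm x y * q.
Proof.
move/eqP/cards2P => [x [y [nxy E]]]; exists x, y; split=> //.
have memE z : (p z != q z) = (z \in [set x; y]) by rewrite -E inE.
have swap u v : [set u; v] = [set x; y] -> u != v -> p u = q v.
  move=> uvE nuv; have : p u != q u by rewrite memE -uvE !inE eqxx.
  case/mismatch_partner => w [nwu]; rewrite memE -uvE !inE (negbTE nwu) /=.
  by move=> /eqP -> <-.
apply/permP => z; rewrite permM; case: tpermP => [->|->|zx zy].
- exact: swap.
- by apply: swap; rewrite 1?setUC 1?eq_sym.
- by apply/eqP/negPn; rewrite memE !inE; apply/norP; split; apply/eqP.
Qed.
End PermutationCycles.

Lemma card_order_cyclic (gT : finGroupType) (G : {group gT}) d :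
  cyclic G -> d %| #|G| -> #|[set x in G | #[x] == d]| = totient d.
Proof.
move=> cycG dG; have /cyclicP [g defG] := cycG; set y := g ^+ (#|G| %/ d).
have oG : #[g] = #|G| by rewrite defG.
have yG : y \in G by rewrite defG groupX ?cycle_id.
have oy : #[y] = d by rewrite orderXdiv oG ?dvdn_div // divnA // mulKn.
rewrite -oy totient_gen; apply: eq_card => x; rewrite !inE /generator.
apply/andP/eqP => [[xG /eqP oxy] | yx].
  by apply/eqP; rewrite (eq_subG_cyclic cycG) ?cycle_subG // -!orderE oxy.
by rewrite -cycle_subG -yx cycle_subG yG orderE -yx.
Qed.

Lemma leq_totient_double m : totient (2 * m) <= 2 * totient m.
Proof.
rewrite mul2n -addnn !totient_count_coprime (big_cat_nat _ (n := m)) ?leq_addr //=.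
rewrite mul2n -addnn leq_add //.
  apply: leq_sum => i _; case: (boolP (coprime (m + m) i)) => // h.
  by rewrite (coprime_dvdl _ h) // dvdn_addr.
rewrite (big_addn 0 (m + m) m) addnK.
apply: leq_sum => i _; case: (boolP (coprime (m + m) (i + m))) => // h.
have : coprime m (i + m) by rewrite (coprime_dvdl _ h) // dvdn_addr.
by rewrite /coprime gcdnDr => ->.
Qed.

Section LeftTranslations.
Variables (T : finType) (op : T -> T -> T).
Hypothesis law : is_group_law op.

Lemma op_injl a : injective (op a).
Proof.
case: law => assoc [e [unit inv]] x y E; case: (inv a) => a' [_ a'a].
by rewrite -(proj1 (unit x)) -(proj1 (unit y)) -a'a -!assoc E.
Qed.

Lemma op_injr z : injective (op^~ z).
Proof.
case: law => assoc [e [unit inv]] x y /= E; case: (inv z) => z' [zz' _].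
by rewrite -(proj2 (unit x)) -(proj2 (unit y)) -zz' !assoc E.
Qed.

Definition lperm a : {perm T} := perm (@op_injl a).

Lemma lpermE a x : lperm a x = op a x.
Proof. by rewrite permE. Qed.

Lemma lpermM a b : lperm a * lperm b = lperm (op b a).
Proof. by case: law => assoc _; apply/permP => x; rewrite permM !lpermE assoc. Qed.

Lemma lperm_inj : injective lperm.
Proof.
case: law => _ [e [unit _]] a b E.
by rewrite -(proj2 (unit a)) -(proj2 (unit b)) -!lpermE E.
Qed.

Definition lperms := [set lperm a | a : T].

Lemma group_set_lperms : group_set lperms.
Proof.
apply/group_setP; split.
  case: law => _ [e [unit _]]; apply/imsetP; exists e => //.
  by apply/permP => x; rewrite lpermE perm1 (proj1 (unit x)).
by move=> _ _ /imsetP [a _ ->] /imsetP [b _ ->]; rewrite lpermM imset_f.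
Qed.

Canonical lperms_group := group group_set_lperms.

Lemma card_lperms : #|lperms| = #|T|.
Proof. exact: card_imset lperm_inj. Qed.

Definition lorder a := #[lperm a].

(* Evaluation at [z] is injective on [<[lperm a]>] by right cancellation. *)
Lemma card_porbit_lperm a z : #|porbit (lperm a) z| = lorder a.
Proof.
rewrite porbit.unlock /lorder /order card_in_imset //.
have sub : <[lperm a]> \subset lperms by rewrite cycle_subG imset_f.
move=> f g /(subsetP sub) /imsetP [c _ ->] /(subsetP sub) /imsetP [c' _ ->].
by rewrite /aperm !lpermE => /op_injr ->.
Qed.

Lemma cyclic_lperms g : lorder g = #|T| -> cyclic lperms.
Proof.
move=> og; apply/cyclicP; exists (lperm g); apply/eqP.
by rewrite eq_sym eqEcard cycle_subG imset_f //= card_lperms -og.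
Qed.

Lemma card_lorder_cyclic g d : lorder g = #|T| -> d %| #|T| ->
  #|[set a | lorder a == d]| = totient d.
Proof.
move=> og dT; rewrite -card_lperms in dT.
rewrite -(card_order_cyclic (cyclic_lperms og) dT) -(card_imset _ lperm_inj).
apply: eq_card => f; apply/imsetP/idP => [[a] | ]; rewrite !inE.
  by move=> oa ->; rewrite imset_f.
by case/andP => /imsetP [a _ ->] oa; exists a; rewrite ?inE.
Qed.

Lemma card_lorder_full : #|[set a | lorder a == #|T|]| <= totient #|T|.
Proof.
have [->|[g]] := set_0Vmem [set a | lorder a == #|T|]; first by rewrite cards0.
by rewrite inE => /eqP og; rewrite (card_lorder_cyclic og).
Qed.

End LeftTranslations.

Definition full_half_lorders (T : finType) (o s : T -> T -> T)
    (Ho : is_group_law o) (Hs : is_group_law s) : {set T} :=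
  [set a | (lorder Ho a == #|T|) && (lorder Hs a == #|T| %/ 2)].

Section TwoLaws.
Variables (T : finType) (o s : T -> T -> T).
Hypotheses (Ho : is_group_law o) (Hs : is_group_law s).

Lemma dist_lperm a : dist o s a = #|[set b | lperm Ho a b != lperm Hs a b]|.
Proof. by apply: eq_card => b; rewrite !inE !lpermE. Qed.

Lemma dist_neq1 a : dist o s a != 1%N.
Proof. by rewrite dist_lperm card_mismatch_neq1. Qed.

Lemma dist2_full_half_lorders a : dist o s a = 2 ->
  a \in full_half_lorders Ho Hs :|: full_half_lorders Hs Ho.
Proof.
rewrite dist_lperm => /card_mismatch2_tperm [x [y [nxy E]]].
have half m : m.*2 = #|T| -> m = #|T| %/ 2 by move=> <-; rewrite divn2 doubleK.
rewrite !inE; case: (tperm_mul_uniform_cases nxy E (card_porbit_lperm Ho a)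
                      (card_porbit_lperm Hs a)) => -[-> /half ->].
  by rewrite !eqxx orbT.
by rewrite !eqxx.
Qed.

Lemma card_full_half_lorders_full : #|full_half_lorders Ho Hs| <= totient #|T|.
Proof.
apply: leq_trans (card_lorder_full Ho); apply: subset_leq_card.
by apply/subsetP => a; rewrite !inE => /andP [].
Qed.

Lemma card_full_half_lorders_half : ~~ odd #|T| ->
  full_half_lorders Hs Ho != set0 ->
  #|full_half_lorders Ho Hs| <= totient (#|T| %/ 2).
Proof.
move=> evT /set0Pn [g]; rewrite inE => /andP [/eqP og _].
have halfT : #|T| %/ 2 %| #|T| by rewrite dvdn_div // dvdn2.
rewrite -(card_lorder_cyclic og halfT); apply: subset_leq_card.
by apply/subsetP => a; rewrite !inE => /andP [].
Qed.

End TwoLaws.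

Lemma card_full_half_lorders (T : finType) (o s : T -> T -> T)
    (Ho : is_group_law o) (Hs : is_group_law s) : ~~ odd #|T| ->
  #|full_half_lorders Ho Hs :|: full_half_lorders Hs Ho| <= 2 * totient (#|T| %/ 2).
Proof.
move=> evT; apply: leq_trans (leq_card_setU _ _) _.
have totT : totient #|T| <= 2 * totient (#|T| %/ 2).
  have dvd2T : 2 %| #|T| by rewrite dvdn2.
  by rewrite -{1}(divnK dvd2T) mulnC leq_totient_double.
have [->|ne_so] := eqVneq (full_half_lorders Hs Ho) set0.
  by rewrite cards0 addn0 (leq_trans (card_full_half_lorders_full Ho Hs)).
have [->|ne_os] := eqVneq (full_half_lorders Ho Hs) set0.
  by rewrite cards0 (leq_trans (card_full_half_lorders_full Hs Ho)).
by rewrite mul2n -addnn leq_add ?card_full_half_lorders_half.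
Qed.

Theorem lemma4p15 (T : finType) (o s : T -> T -> T) :
  is_group_law o -> is_group_law s -> ~~ odd #|T| ->
  #|[set a : T | dist o s a < 3]| <= #|Hset o s| + 2 * totient (#|T| %/ 2).
Proof.
move=> Ho Hs evT.
have sub : [set a | dist o s a < 3] \subset
    Hset o s :|: (full_half_lorders Ho Hs :|: full_half_lorders Hs Ho).
  apply/subsetP => a; have := dist_neq1 Ho Hs a.
  have := @dist2_full_half_lorders _ _ _ Ho Hs a.
  by rewrite !inE; case: (dist o s a) => [|[|[|k]]] // ->.
apply: leq_trans (subset_leq_card sub) (leq_trans (leq_card_setU _ _) _).
by rewrite leq_add2l card_full_half_lorders.
Qed.
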